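(* Let $p$ be an odd prime and $k\in\mathbb{N}$. Then $\mathcal{P}_e(H_3(\mathbb{Z}/p^k\mathbb{Z}))=\Delta_D(H_3(\mathbb{Z}/p^k\mathbb{Z}))$ if and only if $k=1$.
   Context: $H_3(\mathbb{Z}/p^k\mathbb{Z})=\langle y_1,y_2,w\mid [y_1,y_2]=w,\ y_1^{p^k}=y_2^{p^k}=w^{p^k}=[y_1,w]=[y_2,w]=e\rangle$ for an odd prime $p$, with $[x,y]=x^{-1}y^{-1}xy$. The enhanced power graph $\mathcal{P}_e(G)$ has vertex set $G$ with distinct $x,y$ adjacent iff $\langle x,y\rangle$ is cyclic. The deep commuting graph $\Delta_D(G)$ has vertex set $G$, distinct vertices adjacent iff their preimages commute in a Schur cover $\tilde G$ of $G$ (a central extension $\{e\}\to M(G)\to\tilde G\to G\to\{e\}$ with kernel contained in $Z(\tilde G)\cap[\tilde G,\tilde G]$, of maximal order; $M(G)$ the Schur multiplier). *)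

From HB Require Import structures.
From mathcomp Require Import all_boot all_order all_algebra all_fingroup all_solvable.
Set Implicit Arguments. Unset Strict Implicit. Unset Printing Implicit Defensive.
Import GRing.Theory.
Local Open Scope group_scope.

(* H_3(Z/mZ): upper unitriangular 3x3 matrices over 'Z_m, as a subset of GL_3('Z_m).
   With y1 = I + E_12, y2 = I + E_23, w = I + E_13 this is the presented group. *)
Definition heis (m : nat) : {set {'GL_3['Z_m]}} :=
  [set u : {'GL_3['Z_m]} | [forall i : 'I_3, forall j : 'I_3,
     (i < j)%N || (GLval u i j == (if i == j then 1%R else 0%R))]].

Definition epg_adj (gT : finGroupType) (x y : gT) : bool :=
  (x != y) && cyclic <<[set x; y]>>.

Definition stem_ext (gT rT : finGroupType) (G : {set gT}) (K : {group rT})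
    (f : {morphism K >-> gT}) : bool :=
  (f @* K == G) && ('ker f \subset 'Z(K) :&: K^`(1)).
Arguments stem_ext {gT rT} G {K} f.

Definition schur_cover (gT rT : finGroupType) (G : {set gT}) (K : {group rT})
    (f : {morphism K >-> gT}) : Prop :=
  stem_ext G f /\
  forall (sT : finGroupType) (L : {group sT}) (g : {morphism L >-> gT}),
    stem_ext G g -> #|L| <= #|K|.
Arguments schur_cover {gT rT} G {K} f.

(* Deep commuting graph adjacency w.r.t. the Schur cover f : K ->> G:
   distinct, and some (equivalently, all, as ker f is central) preimages commute. *)
Definition dcg_adj (gT rT : finGroupType) (K : {group rT})
    (f : {morphism K >-> gT}) (x y : gT) : Prop :=
  x != y /\ exists x' y', [/\ x' \in K, y' \in K, f x' = x, f y' = y & commute x' y'].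

(* For k >= 2 let n = p^(k-1). The elements with coordinates (n, 0, 0) and (0, 0, n)
   generate two different subgroups of order p, so they are not adjacent in the enhanced
   power graph; but their lifts a^n, w^n commute, because [a, w] is central of order
   dividing p^k, which divides n^2.

   For k = 1 an explicit stem extension shows |ker f| >= p^2. Let w = [a, b] for lifts
   a, b of y1, y2. Since ker f is central, u |-> [u, w] is a homomorphism K -> ker f that
   only depends on the (y1, y2)-coordinates of f u; its image M is generated by
   [a, w] and [b, w], both of order dividing p. Now K' lies in <w> M and properly
   contains ker f, so |M| > p; hence [a, w] and [b, w] satisfy no nontrivial relation
   mod p, and only lifts of central elements commute with w. If lifts of x and y commute and
   x is not central, then y = x^n z with z central, and a lift of z is w^c times an
   element of ker f; so x commutes with w^c, hence c = 0 and y lies in <x>. *)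

From HB Require Import structures.
From mathcomp Require Import all_boot all_order all_algebra all_fingroup all_solvable.
From mathcomp Require Import ring zify.
Set Implicit Arguments. Unset Strict Implicit. Unset Printing Implicit Defensive.
Import GRing.Theory.

Section HeisenbergCoordinates.
Variable m : nat.
Local Open Scope ring_scope.

Definition heis_mx (a b c : 'Z_m) : 'M['Z_m]_3 :=
  1%:M + a *: delta_mx 0 1 + b *: delta_mx 1 2 + c *: delta_mx 0 2.

Lemma heis_mxE a b c (i j : 'I_3) : heis_mx a b c i j =
  match nat_of_ord i, nat_of_ord j with
  | 0, 0 | 1, 1 | 2, 2 => 1 | 0, 1 => a | 1, 2 => b | 0, 2 => c | _, _ => 0 end.
Proof.
rewrite !mxE.
by case: i => [[|[|[|i]]] ?] //; case: j => [[|[|[|j]]] ?] //=;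
  rewrite ?mulr0 ?mulr1 ?addr0 ?add0r.
Qed.

Lemma heis_mxM a b c a' b' c' :
  heis_mx a b c *m heis_mx a' b' c' = heis_mx (a + a') (b + b') (c + c' + a * b').
Proof.
apply/matrixP => i j; rewrite !mxE !big_ord_recr big_ord0 /= !heis_mxE.
by case: i => [[|[|[|i]]] ?] //; case: j => [[|[|[|j]]] ?] //=; ring.
Qed.

Lemma heis_mx0 : heis_mx 0 0 0 = 1%:M.
Proof. by rewrite /heis_mx !scale0r !addr0. Qed.

Lemma heis_mx_unit a b c : heis_mx a b c \in unitmx.
Proof.
have inv : heis_mx a b c *m heis_mx (- a) (- b) (a * b - c) = 1%:M.
  by rewrite heis_mxM !subrr (_ : c + _ + _ = 0) ?heis_mx0 //; ring.
exact: (mulmx1_unit inv).1.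
Qed.

Definition heis_el a b c : {'GL_3['Z_m]} := FinRing.Unit (heis_mx_unit a b c).

Definition heis_a (u : {'GL_3['Z_m]}) := GLval u 0 1.
Definition heis_b (u : {'GL_3['Z_m]}) := GLval u 1 2.
Definition heis_c (u : {'GL_3['Z_m]}) := GLval u 0 2.

Lemma heis_elK a b c :
  [/\ heis_a (heis_el a b c) = a, heis_b (heis_el a b c) = b & heis_c (heis_el a b c) = c].
Proof. by rewrite /heis_a /heis_b /heis_c /= !heis_mxE. Qed.

Lemma heis_el_inj a b c a' b' c' :
  heis_el a b c = heis_el a' b' c' -> [/\ a = a', b = b' & c = c'].
Proof.
move=> E; have := heis_elK a b c; rewrite E.
by have [-> -> ->] := heis_elK a' b' c'; case.
Qed.

Lemma heis_elM a b c a' b' c' :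
  (heis_el a b c * heis_el a' b' c')%g = heis_el (a + a') (b + b') (c + c' + a * b').
Proof. by apply: val_inj; rewrite /= -heis_mxM. Qed.

Lemma heis_el1 : heis_el 0 0 0 = 1%g.
Proof. by apply: val_inj; rewrite /= heis_mx0. Qed.

Lemma heis_el_eq1 a b c : (heis_el a b c == 1%g) = [&& a == 0, b == 0 & c == 0].
Proof.
by rewrite -heis_el1; apply/eqP/and3P => [/heis_el_inj[-> -> ->] | [/eqP-> /eqP-> /eqP->]].
Qed.

Lemma mem_heis_el a b c : heis_el a b c \in heis m.
Proof.
rewrite inE; apply/forallP => i; apply/forallP => j; rewrite /= heis_mxE.
by case: i => [[|[|[|i]]] ?] //; case: j => [[|[|[|j]]] ?].
Qed.

Lemma heis_elE u : u \in heis m -> u = heis_el (heis_a u) (heis_b u) (heis_c u).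
Proof.
rewrite inE => /forallP uT; apply: val_inj; apply/matrixP => i j.
have := uT i => /forallP /(_ j); rewrite [in RHS]/= heis_mxE /heis_a /heis_b /heis_c.
case: i => [[|[|[|i]]] ?] //; case: j => [[|[|[|j]]] ?] //= => uij;
  first [exact/eqP | by congr (GLval u _ _); apply: val_inj].
Qed.

Lemma heis_elV a b c : ((heis_el a b c)^-1)%g = heis_el (- a) (- b) (a * b - c).
Proof.
apply: (mulgI (heis_el a b c)); rewrite mulgV heis_elM -heis_el1.
by apply: (f_equal3 heis_el); ring.
Qed.

Lemma heis_elX a b c n :
  ((heis_el a b c) ^+ n)%g = heis_el (a *+ n) (b *+ n) (c *+ n + a * b *+ 'C(n, 2)).
Proof.
elim: n => [|n IH]; first by rewrite expg0 !mulr0n addr0 heis_el1.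
by rewrite expgSr IH heis_elM binS bin1 !mulrSr !mulrnDr; apply: (f_equal3 heis_el); ring.
Qed.

Lemma heis_elR a b c a' b' c' :
  [~ heis_el a b c, heis_el a' b' c']%g = heis_el 0 0 (a * b' - a' * b).
Proof. by rewrite /commg /conjg !heis_elV !heis_elM; apply: (f_equal3 heis_el); ring. Qed.

Lemma heis_el_commute a b c a' b' c' :
  commute (heis_el a b c) (heis_el a' b' c') <-> a * b' = a' * b.
Proof.
split=> [/commgP | E]; last apply/commgP;
  by rewrite heis_elR heis_el_eq1 /= subr_eq0 ?E // => /eqP.
Qed.

Definition heis_central (u : {'GL_3['Z_m]}) := (heis_a u == 0) && (heis_b u == 0).

Lemma heis_expn_odd u : (1 < m)%N -> odd m -> u \in heis m -> (u ^+ m)%g = 1%g.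
Proof.
move=> m_gt1 m_odd /heis_elE ->.
have mulrn_m0 (x : 'Z_m) : x *+ m = 0 by rewrite -mulr_natr pchar_Zp // mulr0.
by rewrite heis_elX bin2odd // mulrnA !mulrn_m0 mul0rn addr0 heis_el1.
Qed.

End HeisenbergCoordinates.

Arguments heis_el {m} (a b c)%_ring_scope.
Arguments mem_heis_el {m} (a b c)%_ring_scope.

Local Open Scope group_scope.

Lemma Zp_prime_coprime (p : nat) (i : 'Z_p) : prime p -> (i != 0)%R -> coprime p i.
Proof.
move=> p_pr i_neq0; have i_lt_p : (i < p)%N.
  by have := ltn_ord i; rewrite [in X in (_ < X)%N -> _]Zp_cast ?prime_gt1.
rewrite prime_coprime // gtnNdvd // lt0n.
by apply: contraNneq i_neq0 => i0; apply/eqP/val_inj.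
Qed.

Lemma Zp_prime_unit (p : nat) (i : 'Z_p) : prime p -> (i != 0)%R -> (i \is a GRing.unit)%R.
Proof.
by move=> p_pr i_neq0; rewrite -(natr_Zp i) unitZpE ?prime_gt1 ?Zp_prime_coprime.
Qed.

Lemma heis_central_cycle (m : nat) u :
  u \in heis m -> heis_central u -> u \in <[heis_el 0 0 1]>.
Proof.
move=> /heis_elE Eu /andP[/eqP a0 /eqP b0]; rewrite Eu a0 b0.
apply/cycleP; exists (heis_c u).
by rewrite heis_elX; apply: (f_equal3 heis_el); rewrite ?(mul0rn, mulr0, add0r, addr0, natr_Zp).
Qed.

Lemma heis_commute_noncentral (p : nat) u v : prime p -> u \in heis p -> v \in heis p ->
  commute u v -> ~~ heis_central u ->
  exists n, exists c, v = u ^+ n * heis_el 0 0 c.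
Proof.
move=> p_pr /heis_elE Eu /heis_elE Ev cuv; rewrite negb_and => nc_u.
rewrite Ev Eu in cuv *.
set a := heis_a u in cuv nc_u *; set b := heis_b u in cuv nc_u *.
set a' := heis_a v in cuv *; set b' := heis_b v in cuv *.
move/heis_el_commute: cuv => ab'E.
have [t a'E b'E] : exists2 t : 'Z_p, a' = (t * a)%R & b' = (t * b)%R.
  case/orP: nc_u => /(Zp_prime_unit p_pr) unit_ab.
    exists (a' / a)%R; first by rewrite divrK.
    by rewrite -[b'](mulKr unit_ab) ab'E; ring.
  exists (b' / b)%R; last by rewrite divrK.
  by rewrite -[a'](mulKr unit_ab) [(b * a')%R]mulrC -ab'E; ring.
exists t, (heis_c v - (heis_c u * t + a * b * ('C(t, 2))%:R))%R.
have mulrn_t (z : 'Z_p) : (z *+ t = z * t)%R by rewrite -mulr_natr natr_Zp.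
rewrite heis_elX heis_elM !mulrn_t a'E b'E.
by apply: (f_equal3 heis_el); ring.
Qed.

(* A central extension of H_3(Z/mZ) by (Z/mZ)^2, in which the commutators of
   (0, 0, 1, 0, 0) with (0, t, 0, 0, 0) and (t, 0, 0, 0, 0) are (0, 0, 0, 2t, 0) and
   (0, 0, 0, 0, 2t); for odd m it is therefore a stem extension. *)
Record heis_ext (m : nat) := HeisExt { heis_ext_val : 'Z_m * 'Z_m * 'Z_m * 'Z_m * 'Z_m }.

HB.instance Definition _ m := [isNew for @heis_ext_val m].
HB.instance Definition _ m := [Finite of heis_ext m by <:].

Section HeisExtGroup.
Variable m : nat.
Local Open Scope ring_scope.

Definition hext (x y z u v : 'Z_m) : heis_ext m := HeisExt (x, y, z, u, v).

Definition hext_mul (P Q : heis_ext m) : heis_ext m :=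
  let: HeisExt (x, y, z, u, v) := P in
  let: HeisExt (x', y', z', u', v') := Q in
  hext (x + x') (y + y') (z + z' + x * y') (u + u' + x * y' ^+ 2 + 2 * z * y')
       (v + v' + x * (x' * y' - z') + z * x').

Definition hext_inv (P : heis_ext m) : heis_ext m :=
  let: HeisExt (x, y, z, u, v) := P in
  hext (- x) (- y) (x * y - z) (- u - x * y ^+ 2 + 2 * z * y) (- v).

Lemma hext_mulA : associative hext_mul.
Proof.
case=> [[[[[x y] z] u] v]] [[[[[x' y'] z'] u'] v']] [[[[[x'' y''] z''] u''] v'']].
by rewrite /hext_mul /hext; congr (HeisExt (_, _, _, _, _)); ring.
Qed.

Lemma hext_mul1 : left_id (hext 0 0 0 0 0) hext_mul.
Proof.
by case=> [[[[[x y] z] u] v]]; rewrite /hext_mul /hext; congr (HeisExt (_, _, _, _, _)); ring.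
Qed.

Lemma hext_mulV : left_inverse (hext 0 0 0 0 0) hext_inv hext_mul.
Proof.
by case=> [[[[[x y] z] u] v]]; rewrite /hext_mul /hext; congr (HeisExt (_, _, _, _, _)); ring.
Qed.

End HeisExtGroup.

HB.instance Definition _ m :=
  Finite_isGroup.Build (heis_ext m) (@hext_mulA m) (@hext_mul1 m) (@hext_mulV m).

Section HeisExtCover.
Variable m : nat.
Hypotheses (m_gt1 : (1 < m)%N) (m_odd : odd m).
Local Open Scope ring_scope.

Lemma hextM x y z u v x' y' z' u' v' :
  (hext x y z u v * hext x' y' z' u' v' : heis_ext m)%g =
  hext (x + x') (y + y') (z + z' + x * y') (u + u' + x * y' ^+ 2 + 2 * z * y')
       (v + v' + x * (x' * y' - z') + z * x').
Proof. by []. Qed.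

Lemma hextV x y z u v : ((hext x y z u v : heis_ext m)^-1)%g =
  hext (- x) (- y) (x * y - z) (- u - x * y ^+ 2 + 2 * z * y) (- v).
Proof. by []. Qed.

Lemma hextP (P : heis_ext m) : exists x y z u v, P = hext x y z u v.
Proof. by case: P => [[[[[x y] z] u] v]]; exists x, y, z, u, v. Qed.

Definition hext_proj (P : heis_ext m) : {'GL_3['Z_m]} :=
  let: HeisExt (x, y, z, _, _) := P in heis_el x y z.

Lemma hext_projM : {in [set: heis_ext m] &, {morph hext_proj : P Q / (P * Q)%g}}.
Proof. by move=> [[[[[x y] z] u] v]] [[[[[x' y'] z'] u'] v']] _ _; rewrite /= heis_elM. Qed.

Canonical hext_proj_morphism := Morphism hext_projM.

Lemma mem_ker_hext_proj P : P \in 'ker hext_proj -> exists u v, P = hext 0 0 0 u v.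
Proof.
have [x [y [z [u [v ->]]]]] := hextP P; move/mker => /eqP.
by rewrite heis_el_eq1 => /and3P[/eqP-> /eqP-> /eqP->]; exists u, v.
Qed.

Lemma half_Zp_odd : 2 * (m.+1)./2%:R = 1 :> 'Z_m.
Proof.
rewrite -natrM mul2n even_halfK /= ?m_odd //.
by rewrite -natr1 pchar_Zp // add0r.
Qed.

Lemma hext_proj_stem : stem_ext (heis m) hext_proj_morphism.
Proof.
apply/andP; split.
  apply/eqP/setP => w; rewrite morphimEdom.
  apply/imsetP/idP => [[P _ ->] | /heis_elE ->].
    by have [x [y [z [u [v ->]]]]] := hextP P; apply: mem_heis_el.
  by exists (hext (heis_a w) (heis_b w) (heis_c w) 0 0).
apply/subsetP => P /mem_ker_hext_proj[u [v ->]]; rewrite inE; apply/andP; split.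
  apply/centerP; split => // Q _; have [x [y [z [u' [v' ->]]]]] := hextP Q.
  by rewrite /commute !hextM; congr (hext _ _ _ _ _); ring.
pose h := (m.+1)./2%:R : 'Z_m; pose w : heis_ext m := hext 0 0 1 0 0.
have -> : hext 0 0 0 u v =
    ([~ w, hext 0 (h * u)%R 0 0 0] * [~ w, hext (h * v)%R 0 0 0 0])%g.
  by rewrite /commg /conjg !hextV !hextM; congr (hext _ _ _ _ _); ring: half_Zp_odd.
by rewrite groupM // mem_commg.
Qed.

Lemma card_ker_hext_proj : (m * m <= #|'ker hext_proj_morphism|)%N.
Proof.
pose F (uv : 'Z_m * 'Z_m) := hext 0 0 0 uv.1 uv.2.
have F_inj : injective F by move=> [u v] [u' v'] [-> ->].
have : F @: [set: 'Z_m * 'Z_m] \subset 'ker hext_proj_morphism.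
  by apply/subsetP => _ /imsetP[[u v] _ ->]; apply/kerP => //; exact: heis_el1.
by move/subset_leq_card; rewrite card_imset // cardsT card_prod card_ord Zp_cast.
Qed.

End HeisExtCover.

Section GroupFacts.
Variable gT : finGroupType.
Implicit Types (x y z : gT) (G L N Z : {group gT}).

Lemma expg_coprime_eq1 p n x : x ^+ p = 1 -> coprime p n -> x ^+ n = 1 -> x = 1.
Proof.
move=> xp1 co_pn xn1; apply/eqP; rewrite -order_eq1 -dvdn1 -(eqP co_pn).
by rewrite dvdn_gcd !order_dvdn xp1 xn1 !eqxx.
Qed.

Lemma card_gen2_dependent p i j x y : prime p -> x ^+ p = 1 -> y ^+ p = 1 ->
  coprime p i -> x ^+ i * y ^+ j = 1 -> (#|<<[set x; y]>>| <= p)%N.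
Proof.
move=> p_pr xp1 yp1 co_pi xy1.
have x_gen : generator <[x]> (x ^+ i).
  by rewrite generator_coprime (coprime_dvdl _ co_pi) // order_dvdn xp1.
have x_in_y : x \in <[y]>.
  rewrite -cycle_subG (eqP x_gen) cycle_subG.
  have -> : x ^+ i = (y ^+ j)^-1 by apply/eqP; rewrite eq_mulgV1 invgK xy1.
  by rewrite groupV mem_cycle.
have sub_y : <<[set x; y]>> \subset <[y]>.
  by rewrite gen_subG; apply/subsetP => z /set2P[] ->; rewrite ?cycle_id.
apply: leq_trans (subset_leq_card sub_y) _.
by rewrite dvdn_leq ?prime_gt0 // order_dvdn yp1.
Qed.

(* (x^y)^n = (x [x, y])^n = x^n [x, y]^n [[x, y], x]^C(n, 2), and for odd n the last
   factor is a power of [[x, y], x]^n = [[x, y], x^n] = 1. *)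
Lemma commg_expn_odd n x y : odd n ->
  commute x [~ [~ x, y], x] -> commute [~ x, y] [~ [~ x, y], x] ->
  commute (x ^+ n) y -> [~ x, y] ^+ n = 1.
Proof.
move=> n_odd cx cc cxny; set c := [~ x, y].
have xn_c : commute (x ^+ n) c.
  have xn_x : commute (x ^+ n) x by apply/commute_sym/commuteX.
  by rewrite /c /commg /conjg; do !apply: commuteM; try apply: commuteV.
have := expMg_Rmul n cc cx.
rewrite -conjg_mulR -conjXg (conjg_fixP _); last exact/commgP.
rewrite bin2odd // expgM -(commgX n cx) (_ : [~ c, x ^+ n] = 1);
  last exact/eqP/commgP/commute_sym.
rewrite expg1n mulg1 => /(congr1 (fun z => (x ^+ n)^-1 * z)).
by rewrite mulKg mulVg => /esym.
Qed.

Lemma der1_central_mul G L Z : Z \subset 'C(G) -> L \subset G -> G \subset L * Z ->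
  G^`(1) \subset L^`(1).
Proof.
move=> cGZ sLG sGLZ; rewrite derg1 gen_subG; apply/subsetP=> _ /imset2P[u v Gu Gv ->].
have cZ g t : g \in G -> t \in Z -> [~ g, t] = 1.
  by move=> Gg /(subsetP cGZ)/centP/(_ g Gg)/commute_sym/commgP/eqP.
have fixZ g t : g \in G -> t \in Z -> g ^ t = g by move=> Gg Zt; apply/conjg_fixP/eqP/cZ.
have /mulsgP[l z Ll Zz ->] := subsetP sGLZ u Gu.
have /mulsgP[l' z' Ll' Zz' Ev] := subsetP sGLZ v Gv.
have [Gl Gl'] := (subsetP sLG l Ll, subsetP sLG l' Ll').
rewrite commMgJ fixZ ?groupR // -[[~ z, v]]invg_comm (cZ v z) // invg1 mulg1.
by rewrite Ev commgMJ (cZ l z') // fixZ ?groupR // mul1g mem_commg.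
Qed.

Lemma der1_gen2_min x y N : x \in 'N(N) -> y \in 'N(N) -> [~ x, y] \in N ->
  <<[set x; y]>>^`(1) \subset N.
Proof.
move=> Nx Ny Nxy; have sSN : [set x; y] \subset 'N(N).
  by apply/subsetP => _ /set2P[] ->.
apply: der1_min; first by rewrite gen_subG.
rewrite quotient_gen // abelian_gen; apply: quotient_cents2r.
rewrite gen_subG; apply/subsetP => _ /imset2P[u v /set2P[]-> /set2P[]-> ->];
  by rewrite ?commgg ?group1 // -invg_comm groupV.
Qed.

Lemma epg_adj_dcg_adj (rT : finGroupType) (K : {group rT}) (f : {morphism K >-> gT})
    x y :
  x \in f @* K -> y \in f @* K -> epg_adj x y -> dcg_adj f x y.
Proof.
move=> fKx fKy /andP[x_neq_y /cyclicP[g defXY]]; split=> //.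
have sXY : <<[set x; y]>> \subset f @* K.
  by rewrite gen_subG; apply/subsetP => _ /set2P[]->.
have /morphimP[g' Kg' _ Eg] : g \in f @* K by rewrite (subsetP sXY) ?defXY ?cycle_id.
have /cycleP[i ->] : x \in <[g]> by rewrite -defXY mem_gen ?set21.
have /cycleP[j ->] : y \in <[g]> by rewrite -defXY mem_gen ?set22.
exists (g' ^+ i), (g' ^+ j); rewrite !groupX ?morphX -?Eg //.
by split=> //; apply: commuteX2.
Qed.

Lemma prime_cycles_not_cyclic (p : nat) (x y : gT) :
  prime p -> #[x] = p -> #[y] = p -> y \notin <[x]> -> ~~ cyclic <<[set x; y]>>.
Proof.
move=> p_pr ox oy yNx; apply/negP => cyc.
have sub_cyc z : z \in [set x; y] -> <[z]> \subset <<[set x; y]>>.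
  by move=> Sz; rewrite cycle_subG mem_gen.
have := eq_subG_cyclic cyc (sub_cyc x (set21 x y)) (sub_cyc y (set22 x y)).
by rewrite -/#[x] -/#[y] ox oy eqxx => /eqP Exy; rewrite Exy cycle_id in yNx.
Qed.

Lemma sub_conjg_norm G x : G :^ x \subset G -> x \in 'N(G).
Proof. by move=> sGxG; apply/normP/eqP; rewrite eqEcard sGxG cardJg leqnn. Qed.

End GroupFacts.

Section StemExtensions.
Variables (gT : finGroupType) (G : {set gT}).

Lemma card_stem_ext (rT : finGroupType) (K : {group rT}) (f : {morphism K >-> gT}) :
  stem_ext G f -> #|K| = (#|'ker f| * #|G|)%N.
Proof.
case/andP=> /eqP fK _; rewrite -fK -card_morphpre // morphimGK //.
by apply/subsetP => x /dom_ker.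
Qed.

Lemma schur_cover_ker_max (rT sT : finGroupType) (K : {group rT}) (L : {group sT})
    (f : {morphism K >-> gT}) (g : {morphism L >-> gT}) :
  schur_cover G f -> stem_ext G g -> (#|'ker g| <= #|'ker f|)%N.
Proof.
move=> [stem_f maxK] stem_g; have := maxK _ _ _ stem_g.
rewrite (card_stem_ext stem_f) (card_stem_ext stem_g) leq_pmul2r //.
by case/andP: stem_f => /eqP <- _; apply: cardG_gt0.
Qed.

End StemExtensions.

Lemma schur_cover_heis_ker (m : nat) (rT : finGroupType) (K : {group rT})
    (f : {morphism K >-> {'GL_3['Z_m]}}) :
  (1 < m)%N -> odd m -> schur_cover (heis m) f -> (m * m <= #|'ker f|)%N.
Proof.
move=> m_gt1 m_odd coverK; apply: leq_trans (card_ker_hext_proj m_gt1) _.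
exact: schur_cover_ker_max coverK (hext_proj_stem m_gt1 m_odd).
Qed.

Section CentralExtension.
Variables (m : nat) (rT : finGroupType) (K : {group rT}).
Variable f : {morphism K >-> {'GL_3['Z_m]}}.
Hypotheses (fK : f @* K = heis m) (cKf : 'ker f \subset 'Z(K)).

Lemma heis_lift u : u \in heis m -> exists2 u', u' \in K & f u' = u.
Proof. by rewrite -fK => /morphimP[u' Ku' _ ->]; exists u'. Qed.

Lemma mem_heis_morph u : u \in K -> f u \in heis m.
Proof. by move=> Ku; rewrite -fK mem_morphim. Qed.

Lemma ker_commute c u : c \in 'ker f -> u \in K -> commute c u.
Proof. by move=> /(subsetP cKf)/centerP[_ cKc] /cKc. Qed.

Lemma mem_ker_heis u : u \in K -> f u = 1 -> u \in 'ker f.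
Proof. by move=> Ku fu1; apply/kerP. Qed.

Lemma expg_ker_odd u : (1 < m)%N -> odd m -> u \in K -> u ^+ m \in 'ker f.
Proof.
move=> m_gt1 m_odd Ku; rewrite mem_ker_heis ?groupX // morphX //.
exact: heis_expn_odd (mem_heis_morph Ku).
Qed.

(* [a^n, w^n] = [a, w]^(n * n), and [a, w] is central of order dividing m. *)
Lemma heis_lifts_commute (n : nat) : (1 < m)%N -> odd m -> (m %| n * n)%N ->
  exists x', exists y', [/\ x' \in K, y' \in K, f x' = heis_el n%:R 0 0,
                           f y' = heis_el 0 0 n%:R & commute x' y'].
Proof.
move=> m_gt1 m_odd dvd_m_nn.
have [a Ka fa] := heis_lift (mem_heis_el 1 0 0).
have [w Kw fw] := heis_lift (mem_heis_el 0 0 1).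
have ker_aw : [~ a, w] \in 'ker f.
  rewrite mem_ker_heis ?groupR // morphR // fa fw heis_elR.
  by apply/eqP; rewrite heis_el_eq1 /= !(mul0r, mulr0) subrr.
have [ca cw] : commute a [~ a, w] /\ commute w [~ a, w].
  by split; apply/commute_sym/ker_commute.
exists (a ^+ n), (w ^+ n); split; rewrite ?groupX ?morphX ?fa ?fw ?heis_elX //.
- by apply: (f_equal3 heis_el); rewrite ?(mul0rn, mulr0, mul0r, addr0).
- by apply: (f_equal3 heis_el); rewrite ?(mul0rn, mulr0, mul0r, addr0).
apply/commgP; rewrite commXXg // -order_dvdn (dvdn_trans _ dvd_m_nn) // order_dvdn.
rewrite -commXg //; apply/commgP/ker_commute => //.
exact: expg_ker_odd.
Qed.

End CentralExtension.

Lemma heis_dcg_not_epg (p k : nat) (rT : finGroupType) (K : {group rT})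
    (f : {morphism K >-> {'GL_3['Z_(p ^ k)]}}) :
  prime p -> odd p -> (2 <= k)%N -> f @* K = heis (p ^ k) -> 'ker f \subset 'Z(K) ->
  exists x, exists y,
    [/\ x \in heis (p ^ k), y \in heis (p ^ k), ~~ epg_adj x y & dcg_adj f x y].
Proof.
move=> p_pr p_odd k_ge2 fK cKf; set m := (p ^ k)%N; set n := (p ^ k.-1)%N.
have p_gt1 := prime_gt1 p_pr.
have m_odd : odd m by rewrite oddX p_odd orbT.
have np : (n * p)%N = m by rewrite -expnSr prednK // (leq_trans _ k_ge2).
have m_gt1 : (1 < m)%N by rewrite -[1%N](expn0 p) ltn_exp2l // (leq_trans _ k_ge2).
have n_neq0 : (n%:R != 0 :> 'Z_m)%R.
  have n_gt0 : (0 < n)%N by rewrite expn_gt0 prime_gt0.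
  by rewrite -val_eqE /= val_Zp_nat // modn_small -?lt0n // -np ltn_Pmulr.
have np0 : (n%:R *+ p = 0 :> 'Z_m)%R by rewrite -mulr_natr -natrM np pchar_Zp.
pose x : {'GL_3['Z_m]} := heis_el n%:R 0 0; pose y : {'GL_3['Z_m]} := heis_el 0 0 n%:R.
have ox : #[x] = p.
  apply: (nt_prime_order p_pr); rewrite ?heis_elX ?heis_el_eq1 ?negb_and ?n_neq0 //.
  by rewrite -heis_el1; apply: (f_equal3 heis_el); rewrite ?(mul0rn, mulr0, addr0).
have oy : #[y] = p.
  apply: (nt_prime_order p_pr); rewrite ?heis_elX ?heis_el_eq1 /= ?n_neq0 ?andbF //.
  by rewrite -heis_el1; apply: (f_equal3 heis_el); rewrite ?(mul0rn, mulr0, addr0).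
have yNx : y \notin <[x]>.
  apply/cycleP => -[i]; rewrite heis_elX => /heis_el_inj[_ _].
  by rewrite mulr0 !mul0rn addr0 => /eqP; apply/negP.
have dvd_m_nn : (m %| n * n)%N by rewrite -expnD dvdn_exp2l //; lia.
have [x' [y' [Kx' Ky' fx' fy' cx'y']]] :=
  heis_lifts_commute fK cKf m_gt1 m_odd dvd_m_nn.
exists x, y; split; rewrite ?mem_heis_el //.
  by rewrite /epg_adj (negPf (prime_cycles_not_cyclic p_pr ox oy yNx)) andbF.
split; last by exists x', y'.
by apply: contraNneq yNx => ->; apply: cycle_id.
Qed.

Section PrimeCase.
Variables (p : nat) (rT : finGroupType) (K : {group rT}).
Variable f : {morphism K >-> {'GL_3['Z_p]}}.
Hypotheses (p_pr : prime p) (p_odd : odd p) (fK : f @* K = heis p).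
Hypotheses (sKf : 'ker f \subset 'Z(K) :&: K^`(1)) (card_ker : (p * p <= #|'ker f|)%N).
Variables a b : rT.
Hypotheses (Ka : a \in K) (Kb : b \in K).
Hypotheses (fa : f a = heis_el 1 0 0) (fb : f b = heis_el 0 1 0).

Local Notation w := [~ a, b].
Local Notation M := <<[set [~ a, w]; [~ b, w]]>>.

Let p_gt1 : (1 < p)%N := prime_gt1 p_pr.
Let cKf : 'ker f \subset 'Z(K) := subset_trans sKf (subsetIl _ _).
Let Kw : w \in K := groupR Ka Kb.

Lemma morph_commg_lifts : f w = heis_el 0 0 1.
Proof. by rewrite morphR // fa fb heis_elR; apply: (f_equal3 heis_el); ring. Qed.

Lemma commgw_ker u : u \in K -> [~ u, w] \in 'ker f.
Proof.
move=> Ku; rewrite mem_ker_heis ?groupR // morphR // morph_commg_lifts.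
rewrite (heis_elE (mem_heis_morph fK Ku)) heis_elR -heis_el1.
by apply: (f_equal3 heis_el); ring.
Qed.

Lemma commgw_central u v : u \in K -> v \in K -> commute [~ u, w] v.
Proof. by move=> Ku Kv; apply: (ker_commute cKf (commgw_ker Ku) Kv). Qed.

Lemma commgwM u v : u \in K -> v \in K -> [~ u * v, w] = [~ u, w] * [~ v, w].
Proof.
by move=> Ku Kv; rewrite commMgJ; congr (_ * _); apply/conjg_fixP/commgP/commgw_central.
Qed.

Lemma commgwX u n : u \in K -> [~ u ^+ n, w] = [~ u, w] ^+ n.
Proof. by move=> Ku; rewrite commXg //; apply/commute_sym/commgw_central. Qed.

Lemma commgw_ker1 c : c \in 'ker f -> [~ c, w] = 1.
Proof. by move=> kc; apply/eqP/commgP/(ker_commute cKf). Qed.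

Lemma commgw_expp u : u \in K -> [~ u, w] ^+ p = 1.
Proof. by move=> Ku; rewrite -commgwX // commgw_ker1 // (expg_ker_odd fK). Qed.

Lemma heis_lift_decomp u : u \in K -> exists2 k, k \in 'ker f &
  exists c : nat, u = a ^+ heis_a (f u) * b ^+ heis_b (f u) * w ^+ c * k.
Proof.
move=> Ku; have Efu := heis_elE (mem_heis_morph fK Ku).
set i := heis_a (f u) in Efu *; set j := heis_b (f u) in Efu *.
pose c : nat := (heis_c (f u) - i * j)%R.
pose l := a ^+ i * b ^+ j * w ^+ c.
have Kl : l \in K by rewrite !groupM ?groupX.
have fl : f l = f u.
  rewrite !morphM ?groupM ?groupX // !morphX // fa fb morph_commg_lifts.
  rewrite !heis_elX !heis_elM Efu.
  by apply: (f_equal3 heis_el); rewrite /c !natr_Zp; ring.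
exists (l^-1 * u); last by exists c; rewrite mulKVg.
by rewrite mem_ker_heis ?groupM ?groupV // morphM ?groupV // morphV // fl mulVg.
Qed.

Lemma commgwE u : u \in K ->
  [~ u, w] = [~ a, w] ^+ heis_a (f u) * [~ b, w] ^+ heis_b (f u).
Proof.
move=> Ku; have [k kk [c Eu]] := heis_lift_decomp Ku; have Kk := dom_ker kk.
rewrite [in LHS]Eu !commgwM ?groupM ?groupX // !commgwX // commgg expg1n.
by rewrite (commgw_ker1 kk) !mulg1.
Qed.

Lemma commg_lifts_expp : w ^+ p = 1.
Proof.
have kwa : [~ w, a] \in 'ker f by rewrite -invg_comm groupV commgw_ker.
apply: commg_expn_odd p_odd _ _ _.
- exact/commute_sym/(ker_commute cKf).
- exact/commute_sym/(ker_commute cKf).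
- by apply: (ker_commute cKf); rewrite ?(expg_ker_odd fK).
Qed.

Lemma commgw_gen u : u \in K -> [~ u, w] \in M.
Proof. by move=> Ku; rewrite commgwE // groupM ?groupX ?mem_gen ?set21 ?set22. Qed.

Lemma cent_commgw_gen : K \subset 'C(M).
Proof.
rewrite centsC gen_subG; apply/subsetP => _ /set2P[]->; apply/centP => v Kv;
  exact: commgw_central.
Qed.

Lemma norm_commgw_gen : K \subset 'N(<[w]> <*> M).
Proof.
apply/subsetP => x Kx; apply: sub_conjg_norm; rewrite conjYg -cycleJ.
have -> : M :^ x = M by apply/normP/(subsetP (cent_sub M))/(subsetP cent_commgw_gen).
rewrite join_subG joing_subr andbT cycle_subG conjg_mulR groupM //.
  by rewrite (subsetP (joing_subl _ _)) ?cycle_id.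
by rewrite (subsetP (joing_subr _ _)) // -invg_comm groupV commgw_gen.
Qed.

Lemma der1_sub_commgw_gen : K^`(1) \subset <[w]> <*> M.
Proof.
pose L := <<[set a; b]>>.
have sLK : L \subset K by rewrite gen_subG; apply/subsetP => _ /set2P[]->.
have sKLk : K \subset L * 'ker f.
  apply/subsetP => u Ku; have [k kk [c ->]] := heis_lift_decomp Ku.
  by rewrite mem_mulg // !groupM ?groupX ?groupR // mem_gen ?set21 ?set22.
have cKk : 'ker f \subset 'C(K) by apply: subset_trans cKf (subsetIr _ _).
apply: subset_trans (der1_central_mul cKk sLK sKLk) _.
apply: der1_gen2_min; rewrite ?(subsetP norm_commgw_gen) //.
by rewrite (subsetP (joing_subl _ _)) ?cycle_id.
Qed.

Lemma card_commgw_gen : (p < #|M|)%N.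
Proof.
have sk1 : 'ker f \subset K^`(1) by apply: subset_trans sKf (subsetIr _ _).
have k_proper : 'ker f \proper K^`(1).
  rewrite properE sk1; apply/subsetPn; exists w; first by rewrite derg1 mem_commg.
  by apply/negP => /mker; rewrite morph_commg_lifts => /eqP; rewrite heis_el_eq1 andbF.
have card_join : (#|<[w]> <*> M| <= p * #|M|)%N.
  have cwM : M \subset 'C(<[w]>).
    by rewrite centsC (subset_trans _ cent_commgw_gen) ?cycle_subG.
  rewrite cent_joinEr //; apply: dvdn_leq; first by rewrite muln_gt0 prime_gt0 ?cardG_gt0.
  apply: dvdn_trans (dvdn_cardMg _ _) _; rewrite dvdn_pmul2r ?cardG_gt0 //.
  by rewrite -/#[w] order_dvdn commg_lifts_expp.
have := leq_trans (subset_leq_card der1_sub_commgw_gen) card_join.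
move/(leq_trans (proper_card k_proper))/(leq_ltn_trans card_ker).
by rewrite ltn_pmul2l ?prime_gt0.
Qed.

Lemma commute_commgw_central u : u \in K -> commute u w -> heis_central (f u).
Proof.
move=> Ku /commgP/eqP; rewrite commgwE // => de1.
have [dp ep] := (commgw_expp Ka, commgw_expp Kb).
have Mp : ~~ (#|M| <= p)%N by rewrite -ltnNge card_commgw_gen.
have a0 : heis_a (f u) = 0%R.
  apply/eqP; apply: contraNT Mp => a_neq0.
  exact: card_gen2_dependent p_pr dp ep (Zp_prime_coprime p_pr a_neq0) de1.
rewrite /heis_central a0 eqxx /=; apply: contraNT Mp => b_neq0; rewrite setUC.
apply: (card_gen2_dependent p_pr ep dp (Zp_prime_coprime p_pr b_neq0) (_ : _ * _ ^+ 0 = 1)).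
by rewrite mulg1 -de1 a0 mul1g.
Qed.

Lemma noncentral_commute_cyclic x y : x \in K -> y \in K -> commute x y ->
  ~~ heis_central (f x) -> cyclic <<[set f x; f y]>>.
Proof.
move=> Kx Ky cxy nc_x.
have cfxy : commute (f x) (f y) by rewrite /commute -!morphM ?cxy.
have [n [c Efy]] :=
  heis_commute_noncentral p_pr (mem_heis_morph fK Kx) (mem_heis_morph fK Ky) cfxy nc_x.
have [c0 | c_neq0] := eqVneq c 0%R.
  apply: cyclicS (cycle_cyclic (f x)); rewrite gen_subG.
  by apply/subsetP => _ /set2P[]->; rewrite ?cycle_id // Efy c0 heis_el1 mulg1 mem_cycle.
case/negP: nc_x; apply: commute_commgw_central => //.
pose k := (x ^+ n * w ^+ c)^-1 * y.
have kk : k \in 'ker f.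
  apply: mem_ker_heis; first by rewrite /k groupM ?groupV ?groupM ?groupX.
  rewrite /k morphM ?groupV ?groupM ?groupX // morphV ?groupM ?groupX //.
  rewrite morphM ?groupX // !morphX // morph_commg_lifts heis_elX.
  rewrite (_ : heis_el (0 *+ c) _ _ = heis_el 0 0 c) -?Efy ?mulVg //.
  by apply: (f_equal3 heis_el); rewrite ?(mul0rn, mulr0, add0r, addr0, natr_Zp).
have cxwc : commute x (w ^+ c).
  have -> : w ^+ c = (x ^+ n)^-1 * y * k^-1.
    by rewrite /k invMg invgK !mulgA mulgK mulVg mul1g.
  apply: commuteM; first by apply: commuteM => //; apply/commuteV/commuteX.
  exact/commuteV/commute_sym/(ker_commute cKf).
apply/commgP/eqP/(expg_coprime_eq1 (commgw_expp Kx) (Zp_prime_coprime p_pr c_neq0)).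
by rewrite -commgX; [apply/eqP/commgP | apply/commute_sym/commgw_central].
Qed.

Lemma heis_dcg_epg x y : dcg_adj f x y -> epg_adj x y.
Proof.
case=> x_neq_y [x' [y' [Kx' Ky' fx' fy' cx'y']]].
rewrite /epg_adj x_neq_y -fx' -fy' /=.
have [nc_x | c_x] := boolP (~~ heis_central (f x')).
  exact: noncentral_commute_cyclic.
have [nc_y | c_y] := boolP (~~ heis_central (f y')).
  by rewrite setUC; apply: noncentral_commute_cyclic (commute_sym cx'y') _.
apply: cyclicS (cycle_cyclic (heis_el 0 0 1)); rewrite gen_subG.
by apply/subsetP => _ /set2P[]->; apply: heis_central_cycle (mem_heis_morph fK _) (negbNE _).
Qed.

End PrimeCase.

Lemma heis_prime_epg_dcg (p : nat) (rT : finGroupType) (K : {group rT})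
    (f : {morphism K >-> {'GL_3['Z_p]}}) :
  prime p -> odd p -> schur_cover (heis p) f ->
  forall x y, x \in heis p -> y \in heis p -> (epg_adj x y <-> dcg_adj f x y).
Proof.
move=> p_pr p_odd coverK; have [/andP[/eqP fK sKf] _] := coverK.
have card_ker := schur_cover_heis_ker (prime_gt1 p_pr) p_odd coverK.
have [a Ka fa] := heis_lift fK (mem_heis_el 1 0 0).
have [b Kb fb] := heis_lift fK (mem_heis_el 0 1 0).
move=> x y Hx Hy; split; first by apply: epg_adj_dcg_adj; rewrite fK.
exact: (heis_dcg_epg p_pr p_odd fK sKf card_ker Ka Kb fa fb).
Qed.

Unset Implicit Arguments.

Theorem theorem5p4 (p k : nat) (hp : prime p) (hodd : odd p) (hk : (1 <= k)%N)
    (rT : finGroupType) (K : {group rT})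
    (f : {morphism K >-> {'GL_3['Z_(p ^ k)]}}) :
  schur_cover (heis (p ^ k)) f ->
  ((forall x y, x \in heis (p ^ k) -> y \in heis (p ^ k) ->
      (epg_adj x y <-> dcg_adj f x y)) <-> k = 1%N).
Proof.
move=> coverK; split=> [epg_dcg | k1]; last first.
  by subst k; apply: heis_prime_epg_dcg coverK; rewrite expn1.
have [/andP[/eqP fK sKf] _] := coverK.
apply/eqP; rewrite eqn_leq hk andbT leqNgt; apply/negP => k_ge2.
have cKf : 'ker f \subset 'Z(K) by apply: subset_trans sKf (subsetIl _ _).
have [x [y [Hx Hy not_epg dcg]]] := heis_dcg_not_epg hp hodd k_ge2 fK cKf.
by case/negP: not_epg; apply/(epg_dcg x y Hx Hy).
Qed.
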